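(* For any $n\ge1$, $1\le d\le n$ and any $\mathcal{A}\subseteq\{0,1\}^n$, \[ \big(\mathrm{OPT}(\mathsf{Del}(n,d;\mathcal{A}))\big)^{1/2}\le\mathrm{OPT}(\mathsf{Del}(n,d)). \]
   Context: Fourier transform: $\widehat{f}(\mathbf{s})=2^{-n}\sum_{\mathbf{x}\in\{0,1\}^n}f(\mathbf{x})(-1)^{\mathbf{x}\cdot\mathbf{s}}$. $w(\mathbf{x})$ is Hamming weight. $\mathrm{OPT}$ denotes the optimal value of an LP. $\mathsf{Del}(n,d)$: maximize $\sum_{\mathbf{x}}f(\mathbf{x})$ over $f:\{0,1\}^n\to\mathbb{R}$ subject to $f\ge0$, $\widehat f\ge0$, $f(\mathbf{x})=0$ whenever $1\le w(\mathbf{x})\le d-1$, $f(0^n)=1$. $\mathsf{Del}(n,d;\mathcal{A})$: maximize $\sum_{\mathbf{x}}f(\mathbf{x})$ over $f:\{0,1\}^n\to\mathbb{R}$ subject to (D1) $f\ge0$; (D2) $\widehat f\ge 0$; (D3) $f(\mathbf{x})=0$ whenever $1\le w(\mathbf{x})\le d-1$; (D4) $f(0^n)\le\mathrm{OPT}(\mathsf{Del}(n,d))$; (D5) $f(\mathbf{x})\le\sum_{\mathbf{z}}\mathds{1}_{\mathcal{A}}(\mathbf{z})\mathds{1}_{\mathcal{A}}(\mathbf{x}+\mathbf{z})$ for all $\mathbf{x}$ (addition over $\mathbb{F}_2^n$). *)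

From HB Require Import structures.
From mathcomp Require Import all_boot all_order all_algebra.
From mathcomp Require Import classical_sets reals.
Unset Printing Implicit Defensive.
Import Order.TTheory GRing.Theory Num.Theory.
Local Open Scope ring_scope.
Local Open Scope classical_set_scope.

Definition cube (n : nat) := {ffun 'I_n -> bool}.

Definition wt n (x : cube n) : nat := #|[set i | x i]|.

Definition zero_vec n : cube n := [ffun _ => false].

Definition addv n (x z : cube n) : cube n := [ffun i => x i (+) z i].

Definition dotb n (x s : cube n) : bool := odd #|[set i | x i && s i]|.

Definition fourier (R : realType) n (f : cube n -> R) (s : cube n) : R :=
  (2%:R ^+ n)^-1 * \sum_(x : cube n) f x * (-1) ^+ (dotb n x s).

Definition del_feas (R : realType) n d (f : cube n -> R) : Prop :=
  [/\ (forall x, 0 <= f x),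
      (forall s, 0 <= fourier R n f s),
      (forall x, (1 <= wt n x <= d - 1)%N -> f x = 0) &
      f (zero_vec n) = 1].

Definition opt_del (R : realType) n d : R :=
  sup [set \sum_(x : cube n) f x | f in [set f : cube n -> R | del_feas R n d f]].

Definition delA_feas (R : realType) n d (A : {set cube n}) (f : cube n -> R) : Prop :=
  [/\ (forall x, 0 <= f x),
      (forall s, 0 <= fourier R n f s),
      (forall x, (1 <= wt n x <= d - 1)%N -> f x = 0),
      f (zero_vec n) <= opt_del R n d &
      (forall x, f x <= \sum_(z : cube n) (z \in A)%:R * ((addv n x z) \in A)%:R)].

Definition opt_delA (R : realType) n d (A : {set cube n}) : R :=
  sup [set \sum_(x : cube n) f x | f in [set f : cube n -> R | delA_feas R n d A f]].

(* For f : {0,1}^n -> R write S(f) = sum_x f(x) and M = OPT(Del(n,d)).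
   Fourier inversion at the origin gives sum_s \hat f(s) = f(0), while
   \hat f(0) = 2^-n S(f); hence a nonnegative Fourier transform forces
   S(f) <= 2^n f(0).  This shows that the feasible values of Del(n,d) are
   bounded (so M is a genuine supremum) and, since the Dirac mass at 0 is
   feasible, that M >= 1.  Any f satisfying (D1)-(D3) with f(0) > 0 becomes
   feasible for Del(n,d) after dividing by f(0), so S(f) <= M f(0); by the
   previous bound this also holds when f(0) = 0.  With (D4), f(0) <= M, every
   feasible value of Del(n,d;A) is at most M^2, and taking square roots gives
   the theorem. *)
From HB Require Import structures.
From mathcomp Require Import all_boot all_order all_algebra.
From mathcomp Require Import classical_sets reals.
Import Order.TTheory GRing.Theory Num.Theory.
Local Open Scope ring_scope.

(* Flipping the i-th coordinate; an involution of the cube used to pair up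
   the terms of a character sum. *)
Definition flipv n (i : 'I_n) (s : cube n) : cube n :=
  [ffun j => if j == i then ~~ s j else s j].
Arguments flipv {n}.

Lemma flipvK {n} (i : 'I_n) : involutive (flipv i).
Proof.
move=> s; apply/ffunP=> j; rewrite !ffunE.
by case: (j == i); rewrite ?negbK.
Qed.

Lemma dotbE n (x y : cube n) : dotb n x y = odd #|[set j | x j && y j]|.
Proof.
rewrite /dotb; congr odd; apply: eq_card=> j.
by rewrite inE /in_mem /= /in_set boolp.asboolb.
Qed.

Lemma dotb0r n (x : cube n) : dotb n x (zero_vec n) = false.
Proof. by rewrite dotbE (@eq_card _ _ pred0) ?card0 // => j; rewrite !inE ffunE andbF. Qed.

Lemma dotb0l n (s : cube n) : dotb n (zero_vec n) s = false.
Proof. by rewrite dotbE (@eq_card _ _ pred0) ?card0 // => j; rewrite !inE ffunE. Qed.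

Lemma dotb_flip n (x s : cube n) (i : 'I_n) :
  x i -> dotb n x (flipv i s) = ~~ dotb n x s.
Proof.
move=> xi; rewrite !dotbE (cardsD1 i) [in RHS](cardsD1 i).
have -> : [set j | x j && flipv i s j] :\ i = [set j | x j && s j] :\ i.
  by apply/setP=> j; rewrite !inE ffunE; case: eqP.
by rewrite !inE ffunE eqxx xi /=; case: (s i); rewrite /= ?negbK.
Qed.

Lemma wt0 n : wt n (zero_vec n) = 0%N.
Proof.
rewrite /wt (@eq_card _ _ pred0) ?card0 // => j.
by rewrite inE /in_mem /= /in_set boolp.asboolb ffunE.
Qed.

Section Fourier.
Context {R : realType}.

(* Orthogonality of characters: sum_s (-1)^{x.s} is 2^n at x = 0 and 0
   elsewhere, since flipping a coordinate of the support of x negates it. *)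
Lemma char_sum n (x : cube n) :
  \sum_(s : cube n) ((-1 : R) ^+ dotb n x s) = if x == zero_vec n then 2%:R ^+ n else 0.
Proof.
have [->|nz] := eqVneq x (zero_vec n).
  rewrite (eq_bigr (fun _ => 1)) => [|s _]; last by rewrite dotb0l.
  by rewrite sumr_const card_ffun card_bool card_ord -natrX.
have [i xi] : exists i, x i.
  case: (pickP (fun j => x j)) => [j xj|x0]; first by exists j.
  by case/eqP: nz; apply/ffunP=> j; rewrite ffunE x0.
set S := \sum_s _.
have SN : S = - S.
  rewrite {1}/S (reindex_inj (can_inj (flipvK i))) -sumrN.
  apply: eq_bigr=> s _; rewrite dotb_flip //.
  by case: (dotb n x s); rewrite ?expr1 ?expr0 ?opprK.
move/eqP: SN; rewrite -subr_eq0 opprK -mulr2n -mulr_natr mulf_eq0 pnatr_eq0 orbF.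
by move/eqP.
Qed.

Lemma fourier_sum n (f : cube n -> R) : \sum_s fourier R n f s = f (zero_vec n).
Proof.
rewrite /fourier -mulr_sumr exchange_big /=.
rewrite (eq_bigr (fun x => f x * (if x == zero_vec n then 2%:R ^+ n else 0))) => [|x _];
  last by rewrite -mulr_sumr char_sum.
rewrite (bigD1 (zero_vec n)) //= eqxx big1 ?addr0 => [|x /negbTE ->]; last by rewrite mulr0.
by rewrite mulrC -mulrA divff ?mulr1 // expf_neq0 // pnatr_eq0.
Qed.

Lemma fourier0 n (f : cube n -> R) :
  fourier R n f (zero_vec n) = (2%:R ^+ n)^-1 * \sum_x f x.
Proof. by rewrite /fourier; congr (_ * _); apply: eq_bigr=> x _; rewrite dotb0r mulr1. Qed.

Lemma sum_le_fourier_nonneg {n} {f : cube n -> R} :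
  (forall s, 0 <= fourier R n f s) -> \sum_x f x <= 2%:R ^+ n * f (zero_vec n).
Proof.
move=> fhat_ge0; rewrite -fourier_sum [in X in _ <= X](bigD1 (zero_vec n)) //= fourier0.
rewrite mulrDr mulrA divff ?mul1r ?expf_neq0 ?pnatr_eq0 //.
by rewrite lerDl mulr_ge0 ?exprn_ge0 ?ler0n // sumr_ge0.
Qed.

Lemma fourierZ n (c : R) (f : cube n -> R) (s : cube n) :
  fourier R n (fun x => c * f x) s = c * fourier R n f s.
Proof. by rewrite /fourier mulrCA [in RHS]mulr_sumr; congr (_ * _); apply: eq_bigr=> x _; rewrite mulrA. Qed.

End Fourier.

Section DelsarteOptimum.
Local Open Scope classical_set_scope.
Variables (R : realType) (n d : nat).

(* Feasible values of Del(n,d) are bounded by 2^n, so OPT is an upper bound. *)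
Lemma sum_le_opt_del {f : cube n -> R} : del_feas R n d f -> \sum_x f x <= opt_del R n d.
Proof.
move=> ff; apply: ub_le_sup; last by exists f.
exists (2%:R ^+ n) => _ [g [_ ghat_ge0 _ g0] <-].
by have := sum_le_fourier_nonneg ghat_ge0; rewrite g0 mulr1.
Qed.

Lemma dirac_del_feas : del_feas R n d (fun x => (x == zero_vec n)%:R).
Proof.
split=> [x|s|x /andP [wt_ge1 _]|]; rewrite ?eqxx ?ler0n //.
- rewrite /fourier mulr_ge0 ?invr_ge0 ?exprn_ge0 ?ler0n //.
  rewrite (bigD1 (zero_vec n)) //= big1 ?addr0 => [|x /negbTE ->]; last by rewrite mul0r.
  by rewrite dotb0l eqxx mul1r ler01.
- by case: eqP wt_ge1 => // ->; rewrite wt0.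
Qed.

Lemma opt_del_ge1 : 1 <= opt_del R n d.
Proof.
have := sum_le_opt_del dirac_del_feas.
rewrite (bigD1 (zero_vec n)) //= eqxx big1 ?addr0 // => x /negbTE -> //.
Qed.

(* Any f satisfying (D1)-(D3) has total mass at most OPT(Del(n,d)) f(0):
   for f(0) > 0 rescale f to a feasible point, for f(0) = 0 use the
   Fourier bound. *)
Lemma sum_le_opt_del_mul {f : cube n -> R} :
  (forall x, 0 <= f x) -> (forall s, 0 <= fourier R n f s) ->
  (forall x, (1 <= wt n x <= d - 1)%N -> f x = 0) ->
  \sum_x f x <= opt_del R n d * f (zero_vec n).
Proof.
move=> f_ge0 fhat_ge0 f_gap; set c := f (zero_vec n).
have [c0|c_neq0] := eqVneq c 0.
  by have := sum_le_fourier_nonneg fhat_ge0; rewrite -/c c0 !mulr0.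
have c_gt0 : 0 < c by rewrite lt_def c_neq0 f_ge0.
have g_feas : del_feas R n d (fun x => c^-1 * f x).
  split=> [x|s|x /f_gap ->|]; rewrite ?mulr0 ?mulVf //.
  - by rewrite mulr_ge0 ?invr_ge0 ?f_ge0 // ltW.
  - by rewrite fourierZ mulr_ge0 ?invr_ge0 // ltW.
have := sum_le_opt_del g_feas; rewrite -mulr_sumr mulrC.
by rewrite -ler_pdivlMr ?invr_gt0 // invrK.
Qed.

Lemma opt_delA_le_sqr (A : {set cube n}) : opt_delA R n d A <= opt_del R n d ^+ 2.
Proof.
have M_ge0 : 0 <= opt_del R n d := le_trans ler01 opt_del_ge1.
apply: ge_sup.
  exists 0, (fun _ => 0); last by rewrite big1.
  split=> // [s|x]; first by rewrite /fourier big1 ?mulr0 // => x _; rewrite mul0r.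
  by rewrite sumr_ge0 // => z _; rewrite mulr_ge0 ?ler0n.
move=> _ [f [f_ge0 fhat_ge0 f_gap f0_le _] <-].
apply: le_trans (sum_le_opt_del_mul f_ge0 fhat_ge0 f_gap) _.
by rewrite expr2 ler_wpM2l.
Qed.

End DelsarteOptimum.

Theorem mainTheorem4 (R : realType) (n d : nat) (A : {set cube n}) :
  (1 <= n)%N -> (1 <= d <= n)%N ->
  Num.sqrt (opt_delA R n d A) <= opt_del R n d.
Proof.
move=> _ _.
have M_ge0 : 0 <= opt_del R n d := le_trans ler01 (opt_del_ge1 R n d).
rewrite -(ger0_norm M_ge0) -sqrtr_sqr ler_sqrt ?exprn_ge0 //.
exact: opt_delA_le_sqr.
Qed.
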